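(* Let $V$ be a finite set (the vertex set of a graph or hypergraph). A \emph{bad setting} is a pair $(Z,c)$ with $Z\subset V$ and $c$ a coloring of $Z$ (with colors from $\mathbb{N}$); fix a family of bad settings. Let $\mathcal{Z}=\{Z\subset V:\ \exists c \text{ such that } (Z,c) \text{ is a bad setting}\}$, indexed as $\{Z_i\}_{i\in I}$ with $I\subset\mathbb{N}$ finite. For each $i\in I$ let $C_i=\{c: (Z_i,c)\text{ is a bad setting}\}$, and suppose there are integers $0\le k_i<|Z_i|$ and $m_i\ge 1$ such that for every vertex $v\in Z_i$ there is a set $K_{i,v}\subset Z_i\setminus\{v\}$ with $|K_{i,v}|=k_i$ such that every coloring of $K_{i,v}$ extends in at most $m_i$ ways to a coloring $c\in C_i$ of $Z_i$. Put $l_i=|Z_i|-k_i$ and $E=\{l\in\mathbb{N}:\exists i\in I,\ l_i=l\}$. For $l\in E$ and $v\in V$ let $Q_l(v)$ be the set of sets $Z_j\in\mathcal{Z}$ with $v\in Z_j$ and $l_j=l$, and let $d_l=\max_{v\in V}|Q_l(v)|$. Let $\phi_E(x)=1+\sum_{l\in E}x^l$, let $\tau>0$ satisfy $\phi_E(\tau)-\tau\phi_E'(\tau)=0$ (assumed to exist), and set $\gamma=\phi_E'(\tau)$. Then there exists a coloring of $V$ using $\left\lceil \gamma \sup_{i\in I}(d_{l_i}m_i)^{1/l_i}\right\rceil$ colors that avoids all bad settings, i.e. for no $i\in I$ is its restriction to $Z_i$ an element of $C_i$.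
   Context: A coloring of $V$ avoids a bad setting $(Z,c)$ if its restriction to $Z$ is not equal to $c$. *)

From Stdlib Require Export Reals.
From mathcomp Require Export all_boot.
Set Implicit Arguments. Unset Strict Implicit. Unset Printing Implicit Defensive.

Definition is_coloring (V : finType) (Z : {set V}) (c : {ffun V -> option nat}) : Prop :=
  forall v, (c v != None) = (v \in Z).

(* phi_E(x) = 1 + sum_{l in E} x^l, E given as a duplicate-free list. *)
Definition phiE (E : seq nat) (x : R) : R :=
  Rplus 1 (foldr (fun l a => Rplus (pow x l) a) R0 E).

Definition Rceil (x : R) : Z := (- Int_part (- x))%Z.

Definition Rmax_list (s : seq R) : R := foldr Rmax R0 s.

(* Rosenfeld-style counting.  For S a set of vertices let a(S) be the number of
   colourings of S with C + 1 colours that avoid every bad setting contained in S.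
   Extending a good colouring of S \ v at v in all C + 1 ways yields either a good
   colouring of S or a violated bad setting on some Z_i containing v; the latter is
   determined by the restriction to S \ (Z_i \ K_{i,v}) and one of at most m_i
   extensions of its trace on K_{i,v}.  Hence
     (C + 1) a(S \ v) <= a(S) + sum_i m_i a(S \ (Z_i \ K_{i,v})),
   and by induction on |S| this gives a(S) >= beta a(S \ v) for beta = M / tau,
   M = max_i (d_{l_i} m_i)^(1/l_i), as soon as
     sum_{i, v in Z_i} m_i / beta^(l_i - 1) <= C + 1 - beta.
   Grouping the i by l_i, the tangency relation phi_E(tau) = tau gamma turns this
   into gamma M <= C + 1.  So a(V) >= beta^|V| > 0. *)

From mathcomp Require Import all_order all_algebra boolp Rstruct.
From mathcomp Require Import ring lra zify.
From Stdlib Require Znat.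
Set Implicit Arguments. Unset Strict Implicit. Unset Printing Implicit Defensive.
Import Order.TTheory GRing.Theory Num.Theory.

Lemma card_bigcup_le (T : finType) (I : finType) (P : pred I) (A : I -> {set T}) :
  #|\bigcup_(i | P i) A i| <= \sum_(i | P i) #|A i|.
Proof.
elim/big_rec2: _ => [|i y1 y2 _ IH]; first by rewrite cards0.
exact: leq_trans (leq_card_setU _ _) (leq_add _ IH).
Qed.

Section Growth.

Local Open Scope ring_scope.

Lemma set_fun_growth (V : finType) (a : {set V} -> R) (beta : R) : 0 <= beta ->
  (forall (S : {set V}) v, v \in S ->
     (forall T : {set V}, T \subset S :\ v -> a T * beta ^+ (#|S :\ v| - #|T|) <= a (S :\ v)) ->
     beta * a (S :\ v) <= a S) ->
  forall S T : {set V}, T \subset S -> a T * beta ^+ (#|S| - #|T|) <= a S.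
Proof.
move=> beta_ge0 step S; elim: {S}#|S| {-2}S (eqxx #|S|) => [|s IH] S /eqP cardS T TS.
  by move: TS; rewrite (cards0_eq cardS) subset0 => /eqP ->; rewrite cards0 expr0 mulr1.
case: (eqVneq T S) => [->|neq_TS]; first by rewrite subnn expr0 mulr1.
have /properP [_ [v vS vT]] : T \proper S by rewrite properEneq neq_TS TS.
have TS' : T \subset S :\ v.
  by apply/subsetP => u uT; rewrite !inE (subsetP TS u uT) andbT; apply: contraNneq vT => <-.
have cardS' : #|S| = #|S :\ v|.+1 by rewrite (cardsD1 v S) vS.
have /IH IH' : #|S :\ v| == s by rewrite -eqSS -cardS' cardS.
have := step S v vS IH'; have := IH' T TS'.
rewrite cardS' subSn ?subset_leq_card // exprS mulrCA => le1 le2.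
exact: le_trans (ler_wpM2l beta_ge0 le1) le2.
Qed.

End Growth.

Section Colorings.

Variables (V : finType) (bad : {set V} -> {ffun V -> option nat} -> Prop).
Variables (n : nat) (Zs : 'I_n -> {set V}) (C : nat).

Local Notation coloring := {ffun V -> 'I_C.+1}.
Local Notation partial_coloring := {ffun V -> option nat}.

Definition restr (T : {set V}) (f : coloring) : coloring :=
  [ffun u => if u \in T then f u else ord0].

(* A colouring of S is encoded as a total colouring that takes colour 0 outside S. *)
Definition good (S : {set V}) (f : coloring) : Prop :=
  restr S f = f /\
  forall j, Zs j \subset S -> forall c, bad (Zs j) c ->
    ~ (forall u, u \in Zs j -> c u = Some (val (f u))).

Definition good_colorings (S : {set V}) := [set f : coloring | `[< good S f >]].

Lemma good_coloringsP (S : {set V}) (f : coloring) : reflect (good S f) (f \in good_colorings S).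
Proof. by rewrite inE; apply: asboolP. Qed.

Lemma restr_out (T : {set V}) (f : coloring) u : u \notin T -> restr T f u = ord0.
Proof. by rewrite ffunE => /negbTE ->. Qed.

Lemma good_out (S : {set V}) (f : coloring) u : good S f -> u \notin S -> f u = ord0.
Proof. by move=> [<- _] /restr_out ->. Qed.

Lemma good_restr (S T : {set V}) (f : coloring) : good S f -> T \subset S -> good T (restr T f).
Proof.
move=> [_ avoidS] TS; split.
  by apply/ffunP => u; rewrite !ffunE; case: (u \in _).
move=> j jT c bad_c agree; apply: (avoidS j (subset_trans jT TS) c bad_c) => u uj.
by rewrite agree // ffunE (subsetP jT u uj).
Qed.

Lemma good0 : (forall j, Zs j != set0) -> [ffun=> ord0] \in good_colorings set0.
Proof.
move=> Zs_neq0; apply/good_coloringsP; split.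
  by apply/ffunP => u; rewrite !ffunE; case: (u \in _).
by move=> j; rewrite subset0 (negbTE (Zs_neq0 j)).
Qed.

Definition extensions (S : {set V}) (v : V) :=
  [set f : coloring | (restr S f == f) && (restr (S :\ v) f \in good_colorings (S :\ v))].

Lemma card_extensions (S : {set V}) v : v \in S ->
  C.+1 * #|good_colorings (S :\ v)| <= #|extensions S v|.
Proof.
move=> vS; have vS' : v \notin S :\ v by rewrite !inE eqxx.
pose set_at (p : coloring * 'I_C.+1) : coloring :=
  [ffun u => if u == v then p.2 else p.1 u].
have set_at_restr g a : good (S :\ v) g -> restr (S :\ v) (set_at (g, a)) = g.
  move=> gG; apply/ffunP => u; rewrite !ffunE /=.
  case: (eqVneq u v) => [->|_]; last by case: ifP => // /negbT /(good_out gG) ->.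
  by rewrite (negbTE vS') (good_out gG).
rewrite mulnC -[in X in _ * X](card_ord C.+1) -cardsT -cardsX -(card_in_imset (f := set_at)).
  apply: subset_leq_card; apply/subsetP => f /imsetP [[g a]].
  rewrite in_setX /= => /andP [/good_coloringsP gG _] ->.
  rewrite inE set_at_restr //; apply/andP; split; last exact/good_coloringsP.
  apply/eqP/ffunP => u; rewrite !ffunE /=; case: ifP => // /negbT uS.
  have uv : u != v by apply: contraNneq uS => ->.
  by rewrite (negbTE uv) (good_out gG) // !inE negb_and uS orbT.
move=> [g a] [g' a']; rewrite !in_setX /= => /andP [/good_coloringsP gG _].
move=> /andP [/good_coloringsP gG' _] eq_set.
congr (_, _); last by move/ffunP: eq_set => /(_ v); rewrite !ffunE /= eqxx.
by rewrite -(set_at_restr _ a gG) -(set_at_restr _ a' gG') eq_set.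
Qed.

Section Recoloring.

Variables (m : 'I_n -> nat) (K : 'I_n -> V -> {set V}).
Variable sf : 'I_n -> V -> partial_coloring -> seq partial_coloring.
Hypothesis K_sub : forall i v, v \in Zs i -> K i v \subset Zs i :\ v.
Hypothesis size_sf : forall i v cK, v \in Zs i -> is_coloring (K i v) cK ->
  size (sf i v cK) <= m i.
Hypothesis sf_complete : forall i v cK c, v \in Zs i -> is_coloring (K i v) cK ->
  bad (Zs i) c -> (forall u, u \in K i v -> c u = cK u) -> c \in sf i v cK.

Definition as_partial (T : {set V}) (g : coloring) : partial_coloring :=
  [ffun u => if u \in T then Some (val (g u)) else None].

Lemma as_partial_coloring T g : is_coloring T (as_partial T g).
Proof. by move=> u; rewrite ffunE; case: (u \in T). Qed.

Definition overwrite (Z : {set V}) (g : coloring) (c : partial_coloring) : coloring :=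
  [ffun u => if u \in Z then inord (odflt 0 (c u)) else g u].

Section Step.

Variables (S : {set V}) (v : V).

Definition shrink i := S :\: (Zs i :\: K i v).

(* A colouring violating Z_i is recovered from its restriction to [shrink i]
   together with the position of the violated bad colouring in the list [sf]. *)
Definition recolorings i :=
  [set overwrite (Zs i) p.1 (nth [ffun=> None] (sf i v (as_partial (K i v) p.1)) p.2)
  | p : coloring * 'I_(m i) in setX (good_colorings (shrink i)) [set: 'I_(m i)]].

Lemma card_recolorings i : #|recolorings i| <= m i * #|good_colorings (shrink i)|.
Proof.
by apply: leq_trans (leq_imset_card _ _) _; rewrite cardsX cardsT card_ord mulnC.
Qed.

Lemma shrink_sub i : v \in Zs i -> shrink i \subset S :\ v.
Proof.
move=> vi; apply/subsetP => u; rewrite !inE => /andP [uZK ->]; rewrite andbT.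
apply: contra uZK => /eqP ->; rewrite vi andbT.
by apply/negP => /(subsetP (K_sub vi)); rewrite !inE eqxx.
Qed.

Lemma K_sub_shrink i : v \in Zs i -> Zs i \subset S -> K i v \subset shrink i.
Proof.
move=> vi iS; apply/subsetP => u uK; have := subsetP (K_sub vi) u uK.
by rewrite !inE uK => /andP [_ uZ]; rewrite (subsetP iS u uZ).
Qed.

Lemma violation_recolored f j c : f \in extensions S v -> v \in Zs j -> Zs j \subset S ->
  bad (Zs j) c -> (forall u, u \in Zs j -> c u = Some (val (f u))) -> f \in recolorings j.
Proof.
rewrite inE => /andP [/eqP fS /good_coloringsP f_good] vj jS bad_c agree.
pose g := restr (shrink j) f.
have g_good : good (shrink j) g.
  have -> : g = restr (shrink j) (restr (S :\ v) f).
    apply/ffunP => u; rewrite !ffunE; case: ifP => // u_shr.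
    by rewrite (subsetP (shrink_sub vj) u u_shr).
  exact: good_restr f_good (shrink_sub vj).
have c_in : c \in sf j v (as_partial (K j v) g).
  apply: sf_complete (as_partial_coloring _ _) bad_c _ => // u uK.
  have uj : u \in Zs j by have := subsetP (K_sub vj) u uK; rewrite !inE => /andP [].
  by rewrite agree // !ffunE uK (subsetP (K_sub_shrink vj jS) u uK).
have idx_lt : index c (sf j v (as_partial (K j v) g)) < m j.
  by apply: leq_trans _ (size_sf vj (as_partial_coloring _ g)); rewrite index_mem.
apply/imsetP; exists (g, Ordinal idx_lt).
  by rewrite in_setX in_setT andbT; apply/good_coloringsP.
apply/ffunP => u; rewrite ffunE /= nth_index //; case: ifP => uj.
  by rewrite agree //= inord_val.
rewrite ffunE; case: ifP => // /negbT u_shr.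
rewrite -fS restr_out //; apply: contraNN u_shr => uS.
by rewrite !inE uS uj andbF.
Qed.

Lemma extensions_cover : extensions S v \subset
  good_colorings S :|: \bigcup_(i | (v \in Zs i) && (Zs i \subset S)) recolorings i.
Proof.
apply/subsetP => f f_ext; apply/setUP.
case: (boolP (f \in \bigcup_(i | (v \in Zs i) && (Zs i \subset S)) recolorings i)).
  by right.
move=> not_rec; left; move: (f_ext); rewrite inE => /andP [/eqP fS /good_coloringsP [_ avoid]].
apply/good_coloringsP; split => // j jS c bad_c agree.
case: (boolP (v \in Zs j)) => vj.
  apply: (negP not_rec); apply/bigcupP; exists j; first by rewrite vj jS.
  exact: violation_recolored f_ext vj jS bad_c agree.
have jS' : Zs j \subset S :\ v.
  apply/subsetP => u uj; rewrite !inE (subsetP jS u uj) andbT.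
  by apply: contraNneq vj => <-.
apply: (avoid j jS' c bad_c) => u uj; by rewrite agree // ffunE (subsetP jS' u uj).
Qed.

Lemma count_step : v \in S ->
  C.+1 * #|good_colorings (S :\ v)| <= #|good_colorings S| +
    \sum_(i | (v \in Zs i) && (Zs i \subset S)) m i * #|good_colorings (shrink i)|.
Proof.
move=> vS; apply: leq_trans (card_extensions vS) _.
apply: leq_trans (subset_leq_card extensions_cover) _.
apply: leq_trans (leq_card_setU _ _) _; rewrite leq_add2l.
apply: leq_trans (card_bigcup_le _ _) _; apply: leq_sum => i _.
exact: card_recolorings.
Qed.

End Step.

Variable k : 'I_n -> nat.
Hypothesis card_K : forall i v, v \in Zs i -> #|K i v| = k i.
Hypothesis k_lt : forall i, k i < #|Zs i|.

Lemma card_shrink (S : {set V}) v i : v \in S -> v \in Zs i -> Zs i \subset S ->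
  #|S :\ v| - #|shrink S v i| = (#|Zs i| - k i).-1.
Proof.
move=> vS vi iS.
have KZ : K i v \subset Zs i := subset_trans (K_sub vi) (subD1set _ _).
have DS : Zs i :\: K i v \subset S := subset_trans (subsetDl _ _) iS.
have := cardsD1 v S; have := subset_leq_card iS; have := k_lt i.
rewrite vS /shrink (cardsD S (Zs i :\: K i v)) (setIidPr DS) (cardsD (Zs i)) (setIidPr KZ) card_K //.
lia.
Qed.

Local Open Scope ring_scope.

Local Notation ncol S := (#|good_colorings S|%:R : R).

Lemma ncol_step (beta : R) : 0 < beta ->
  (forall v, \sum_(i | v \in Zs i) (m i)%:R / beta ^+ (#|Zs i| - k i).-1 <= C.+1%:R - beta) ->
  forall (S : {set V}) v, v \in S ->
  (forall T : {set V}, T \subset S :\ v -> ncol T * beta ^+ (#|S :\ v| - #|T|) <= ncol (S :\ v)) ->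
  beta * ncol (S :\ v) <= ncol S.
Proof.
move=> beta_gt0 weights S v vS IH.
have := count_step vS; rewrite -(ler_nat R) natrD natrM natr_sum.
under eq_bigr => i _ do rewrite natrM.
have A_ge0 : 0 <= ncol (S :\ v) by [].
have shrink_le i : v \in Zs i -> Zs i \subset S ->
    ncol (shrink S v i) <= ncol (S :\ v) / beta ^+ (#|Zs i| - k i).-1.
  move=> vi iS; rewrite ler_pdivlMr ?exprn_gt0 // -(card_shrink vS vi iS).
  exact/IH/shrink_sub.
have sum_le : \sum_(i | (v \in Zs i) && (Zs i \subset S)) (m i)%:R * ncol (shrink S v i)
    <= ncol (S :\ v) * \sum_(i | v \in Zs i) (m i)%:R / beta ^+ (#|Zs i| - k i).-1.
  rewrite mulr_sumr big_mkcond [in X in _ <= X]big_mkcond /=; apply: ler_sum => i _.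
  case: (boolP (v \in Zs i)) => vi //=; rewrite mulrCA.
  case: (boolP (Zs i \subset S)) => iS; first by rewrite ler_wpM2l // shrink_le.
  by rewrite mulr_ge0 // divr_ge0 // exprn_ge0 // ltW.
have := ler_wpM2l A_ge0 (weights v) => bound count.
have := le_trans count (lerD (lexx _) (le_trans sum_le bound)); lra.
Qed.

Lemma exists_good_coloring (beta : R) : 0 < beta ->
  (forall v, \sum_(i | v \in Zs i) (m i)%:R / beta ^+ (#|Zs i| - k i).-1 <= C.+1%:R - beta) ->
  exists f, f \in good_colorings setT.
Proof.
move=> beta_gt0 weights.
have Zs_neq0 j : Zs j != set0 by rewrite -card_gt0 (leq_ltn_trans _ (k_lt j)).
have ncol0 : 0 < ncol set0.
  by rewrite ltr0n card_gt0; apply/set0Pn; exists [ffun=> ord0]; apply: good0.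
have := set_fun_growth (ltW beta_gt0) (ncol_step beta_gt0 weights) (sub0set setT).
move=> /(lt_le_trans (mulr_gt0 ncol0 (exprn_gt0 _ beta_gt0))).
by rewrite ltr0n => /card_gt0P.
Qed.

End Recoloring.

End Colorings.

Lemma choose_witnesses (V : finType) (bad : {set V} -> {ffun V -> option nat} -> Prop)
    n (Zs : 'I_n -> {set V}) (k m : 'I_n -> nat) :
  (forall i v, v \in Zs i ->
     exists K : {set V}, K \subset Zs i :\ v /\ #|K| = k i /\
       forall cK, is_coloring K cK ->
         exists s : seq {ffun V -> option nat}, size s <= m i /\
           forall c, bad (Zs i) c -> (forall u, u \in K -> c u = cK u) -> c \in s) ->
  exists (K : 'I_n -> V -> {set V})
         (sf : 'I_n -> V -> {ffun V -> option nat} -> seq {ffun V -> option nat}),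
    [/\ forall i v, v \in Zs i -> K i v \subset Zs i :\ v,
        forall i v, v \in Zs i -> #|K i v| = k i,
        forall i v cK, v \in Zs i -> is_coloring (K i v) cK -> size (sf i v cK) <= m i
      & forall i v cK c, v \in Zs i -> is_coloring (K i v) cK -> bad (Zs i) c ->
          (forall u, u \in K i v -> c u = cK u) -> c \in sf i v cK].
Proof.
move=> witnesses.
have /choice [K HK] : forall iv : 'I_n * V, exists K : {set V}, iv.2 \in Zs iv.1 ->
    [/\ K \subset Zs iv.1 :\ iv.2, #|K| = k iv.1 &
      forall cK, is_coloring K cK ->
        exists s : seq {ffun V -> option nat}, size s <= m iv.1 /\
          forall c, bad (Zs iv.1) c -> (forall u, u \in K -> c u = cK u) -> c \in s].
  move=> [i v] /=; case: (boolP (v \in Zs i)) => [vi|_]; last by exists set0.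
  by have [K [? [? ?]]] := witnesses i v vi; exists K.
have /choice [sf Hsf] : forall ivc : 'I_n * V * {ffun V -> option nat},
    exists s : seq {ffun V -> option nat}, ivc.1.2 \in Zs ivc.1.1 ->
      is_coloring (K ivc.1) ivc.2 -> size s <= m ivc.1.1 /\
      forall c, bad (Zs ivc.1.1) c -> (forall u, u \in K ivc.1 -> c u = ivc.2 u) -> c \in s.
  move=> [[i v] cK] /=; case: (boolP (v \in Zs i)) => [vi|_]; last by exists [::].
  have [_ _ extend] := HK (i, v) vi.
  have [/extend [s ?]|not_col] := EM (is_coloring (K (i, v)) cK); last by exists [::].
  by exists s.
exists (fun i v => K (i, v)), (fun i v cK => sf (i, v, cK)); split.
- by move=> i v vi; have [] := HK (i, v) vi.
- by move=> i v vi; have [] := HK (i, v) vi.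
- by move=> i v cK vi cK_col; have [] := Hsf (i, v, cK) vi cK_col.
- by move=> i v cK c vi cK_col; have [_] := Hsf (i, v, cK) vi cK_col; apply.
Qed.

Section RealBounds.

Local Open Scope ring_scope.

Lemma Rceil_succ (x : R) : 0 < x -> exists C, Z.to_nat (Rceil x) = C.+1 /\ x <= C.+1%:R.
Proof.
move=> /RltP x_gt0.
have x_le : Rle x (INR (Z.to_nat (Rceil x))).
  have [int_le _] := base_Int_part (- x).
  have ceil_ge : Rle x (IZR (Rceil x)).
    by rewrite /Rceil opp_IZR -{1}[x]Ropp_involutive; apply: Ropp_le_contravar.
  rewrite INR_IZR_INZ Znat.Z2Nat.id //.
  by apply: le_IZR; apply: Rlt_le; apply: Rlt_le_trans x_gt0 ceil_ge.
case: (Z.to_nat (Rceil x)) x_le => [|C] x_le.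
  by have /Rlt_irrefl := Rlt_le_trans _ _ _ x_gt0 x_le.
by exists C; split => //; rewrite -INRE; apply/RleP.
Qed.

Lemma Rmax_list_ge (s : seq R) x : x \in s -> x <= Rmax_list s.
Proof.
elim: s => [|y s IH] //=; rewrite in_cons => /orP [/eqP ->|/IH /RleP x_le]; apply/RleP.
  exact: Rmax_l.
exact: Rle_trans x_le (Rmax_r _ _).
Qed.

Lemma Rpower_root_le (x M : R) (l : nat) :
  0 < x -> (0 < l)%N -> Rpower x (Rinv (INR l)) <= M -> x <= M ^+ l.
Proof.
move=> /RltP x_gt0 l_gt0 /RleP root_le; rewrite -RpowE; apply/RleP.
have l_neq0 : INR l <> R0 by apply: not_0_INR; lia.
rewrite -Rpower_pow; last exact: Rlt_le_trans (exp_pos _) root_le.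
have {1}-> : x = Rpower (Rpower x (Rinv (INR l))) (INR l).
  by rewrite Rpower_mult Rinv_l // Rpower_1.
by apply: Rle_Rpower_l; [exact: pos_INR | split => //; exact: exp_pos].
Qed.

Lemma phiE_sum (E : seq nat) (x : R) : phiE E x = 1 + \sum_(l <- E) x ^+ l.
Proof.
rewrite /phiE; congr (_ + _); elim: E => [|l E IH]; first by rewrite big_nil.
by rewrite big_cons /= IH RpowE.
Qed.

Lemma phiE_tangent (E : seq nat) (tau gamma : R) :
  Rminus (phiE E tau) (Rmult tau gamma) = R0 -> 1 + \sum_(l <- E) tau ^+ l = tau * gamma.
Proof. by move/Rminus_diag_uniq; rewrite phiE_sum. Qed.

(* [phiE [::]] is the constant 1, whose tangents never pass through the origin. *)
Lemma phiE_tangent_nonnil (E : seq nat) (tau gamma : R) :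
  derivable_pt_lim (phiE E) tau gamma -> 1 + \sum_(l <- E) tau ^+ l = tau * gamma ->
  E != [::].
Proof.
move=> der tangent; apply/eqP => E0; move: der tangent; rewrite E0 => der.
have -> := uniqueness_limite _ _ _ _ der (derivable_pt_lim_const (Rplus 1 R0) tau).
by rewrite big_nil addr0 mulr0 => /eqP; rewrite oner_eq0.
Qed.

Lemma tangent_slope_gt0 (E : seq nat) (tau gamma : R) :
  0 < tau -> 1 + \sum_(l <- E) tau ^+ l = tau * gamma -> 0 < gamma.
Proof.
move=> tau_gt0 tangent; rewrite -(pmulr_rgt0 _ tau_gt0) -tangent.
by rewrite ltr_wpDr // sumr_ge0 // => l _; rewrite exprn_ge0 // ltW.
Qed.

Lemma sum_pred1_uniq (E : seq nat) (F : nat -> R) x : uniq E -> x \in E ->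
  \sum_(l <- E | x == l) F l = F x.
Proof.
move=> uE xE; rewrite big_mkcond (bigD1_seq x) //= eqxx big1 ?addr0 //.
by move=> l; rewrite eq_sym => /negbTE ->.
Qed.

Lemma sum_levels_le n (l : 'I_n -> nat) (d : nat -> nat) (E : seq nat) (P : pred 'I_n)
    (tau : R) : 0 <= tau -> uniq E -> (forall i, l i \in E) ->
  (forall ll, (#|[set j | P j && (l j == ll)]| <= d ll)%N) ->
  \sum_(i | P i) tau ^+ l i / (d (l i))%:R <= \sum_(ll <- E) tau ^+ ll.
Proof.
move=> tau_ge0 uE lE card_level.
under eq_bigr => i _ do rewrite -(sum_pred1_uniq (fun ll => tau ^+ ll / (d ll)%:R) uE (lE i)).
rewrite (exchange_big_dep predT) //=; apply: ler_sum => ll _.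
rewrite sumr_const; set c := #|_|.
have c_le : (c <= d ll)%N.
  by apply: leq_trans (card_level ll); apply: eq_leq; apply: eq_card => i; rewrite inE.
rewrite -[_ *+ c]mulr_natr -mulrA.
case: (posnP (d ll)) => [d0 | d_gt0].
  by move: c_le; rewrite d0 leqn0 => /eqP ->; rewrite invr0 mul0r mulr0 exprn_ge0.
apply: ler_piMr; first exact: exprn_ge0.
by rewrite mulrC ler_pdivrMr ?ltr0n // mul1r ler_nat.
Qed.

Lemma weighted_sum_le n (l m : 'I_n -> nat) (d : nat -> nat) (E : seq nat) (P : pred 'I_n)
    (tau gamma M : R) (C : nat) :
  0 < tau -> 0 < M -> uniq E -> (forall i, l i \in E) -> (forall i, (0 < l i)%N) ->
  (forall i, ((d (l i) * m i)%:R : R) <= M ^+ l i) ->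
  (forall ll, (#|[set j | P j && (l j == ll)]| <= d ll)%N) ->
  1 + \sum_(ll <- E) tau ^+ ll = tau * gamma -> gamma * M <= C%:R ->
  \sum_(i | P i) (m i)%:R / (M / tau) ^+ (l i).-1 <= C%:R - M / tau.
Proof.
move=> tau_gt0 M_gt0 uE lE l_gt0 dm_le card_level tangent gM_le.
set beta := M / tau; have beta_gt0 : 0 < beta by rewrite divr_gt0.
have term_le i : P i -> (m i)%:R / beta ^+ (l i).-1 <= beta * (tau ^+ l i / (d (l i))%:R).
  move=> Pi; have d_gt0 : (0 < d (l i))%N.
    by apply: leq_trans (card_level _); apply/card_gt0P; exists i; rewrite inE Pi eqxx.
  rewrite ler_pdivrMr ?exprn_gt0 //.
  have -> : beta * (tau ^+ l i / (d (l i))%:R) * beta ^+ (l i).-1 = M ^+ l i / (d (l i))%:R.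
    have powSr (x : R) : x ^+ l i = x ^+ (l i).-1 * x by rewrite -exprSr prednK.
    rewrite !powSr /beta exprMn exprVn; field.
    by rewrite pnatr_eq0 -lt0n d_gt0 !gt_eqF ?exprn_gt0.
  by rewrite ler_pdivlMr ?ltr0n // mulrC -natrM.
apply: le_trans (ler_sum _ term_le) _; rewrite -mulr_sumr.
apply: le_trans (ler_wpM2l (ltW beta_gt0) (sum_levels_le (ltW tau_gt0) uE lE card_level)) _.
have -> : beta * \sum_(ll <- E) tau ^+ ll = gamma * M - beta.
  by rewrite /beta -[X in _ * X](addKr 1) tangent; field; rewrite gt_eqF.
by rewrite lerD2r.
Qed.

End RealBounds.

Theorem theorem1 (V : finType) (bad : {set V} -> {ffun V -> option nat} -> Prop)
  (n : nat) (Zs : 'I_n -> {set V}) (k m : 'I_n -> nat) (tau gamma : R) :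
  (forall Z0 c, bad Z0 c -> is_coloring Z0 c) ->
  injective Zs ->
  (forall Z0 : {set V}, (exists c, bad Z0 c) <-> (exists i, Zs i = Z0)) ->
  (forall i, k i < #|Zs i|) ->
  (forall i, 0 < m i) ->
  (forall i v, v \in Zs i ->
     exists K : {set V}, K \subset Zs i :\ v /\ #|K| = k i /\
       forall cK, is_coloring K cK ->
         exists s : seq {ffun V -> option nat}, size s <= m i /\
           forall c, bad (Zs i) c -> (forall u, u \in K -> c u = cK u) -> c \in s) ->
  let l := fun i => #|Zs i| - k i in
  let E := undup [seq l i | i <- enum 'I_n] in
  let d := fun ll : nat => \max_(v : V) #|[set j | (v \in Zs j) && (l j == ll)]| in
  Rlt 0 tau ->
  derivable_pt_lim (phiE E) tau gamma ->
  Rminus (phiE E tau) (Rmult tau gamma) = R0 ->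
  exists col : V -> nat,
    (forall v, col v < Z.to_nat (Rceil (Rmult gamma
        (Rmax_list [seq Rpower (INR (d (l i) * m i)) (Rinv (INR (l i))) | i <- enum 'I_n])))) /\
    forall i c, bad (Zs i) c -> ~ (forall v, v \in Zs i -> c v = Some (col v)).
Proof.
(* The bound only uses the sets Zs i, not how they index the bad settings. *)
move=> _ _ _ k_lt m_gt0 witnesses l E d /RltP tau_gt0 der /phiE_tangent tangent.
have [K [sf [K_sub card_K size_sf sf_complete]]] := choose_witnesses witnesses.
have lE i : l i \in E by rewrite mem_undup map_f ?mem_enum.
have l_gt0 i : 0 < l i by rewrite subn_gt0.
have level_le v ll : #|[set j | (v \in Zs j) && (l j == ll)]| <= d ll.
  exact: leq_bigmax.
have d_gt0 i : 0 < d (l i).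
  have [u ui] : exists u, u \in Zs i by apply/set0Pn; rewrite -card_gt0 (leq_ltn_trans _ (k_lt i)).
  by apply: leq_trans (level_le u _); apply/card_gt0P; exists i; rewrite inE ui eqxx.
set M := Rmax_list _.
have root_le i : (Rpower (INR (d (l i) * m i)) (Rinv (INR (l i))) <= M)%R.
  by apply: Rmax_list_ge; apply: map_f; rewrite mem_enum.
have dm_le i : ((d (l i) * m i)%:R <= M ^+ l i :> R)%R.
  by apply: Rpower_root_le; rewrite ?ltr0n ?muln_gt0 ?d_gt0 ?m_gt0 // -INRE.
have [i0 _] : exists i0 : 'I_n, i0 \in enum 'I_n.
  have := phiE_tangent_nonnil der tangent; rewrite /E.
  by case: (enum 'I_n) => [|i0 s] //; exists i0; rewrite inE eqxx.
have M_gt0 : (0 < M)%R by apply: lt_le_trans (root_le i0); apply/RltP; apply: exp_pos.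
have [C [-> gM_le]] := Rceil_succ (mulr_gt0 (tangent_slope_gt0 tau_gt0 tangent) M_gt0).
have [f /good_coloringsP [_ avoid]] := exists_good_coloring K_sub size_sf sf_complete card_K k_lt
  (divr_gt0 M_gt0 tau_gt0)
  (fun v => weighted_sum_le tau_gt0 M_gt0 (undup_uniq _) lE l_gt0 dm_le (level_le v) tangent gM_le).
exists (fun v => val (f v)); split => [v | i c bad_c]; first exact: ltn_ord.
exact: avoid i (subsetT _) c bad_c.
Qed.
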